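(* Let $n\geq 2$. $\mathrm{Aut}(\mathbf{D}_n)$ acts continuously and transitively on $\mathcal{R}_n$ via the logic action $g\cdot(\prec_1,\ldots,\prec_n)=(\prec_1^g,\ldots,\prec_n^g)$, where $\mathbf{a}\prec_i^g\mathbf{b}$ iff $g^{-1}(\mathbf{a})\prec_ig^{-1}(\mathbf{b})$, for all $i\leq n$, $\mathbf{a},\mathbf{b}\in D_n$ and $g\in\mathrm{Aut}(\mathbf{D}_n)$ (in particular this action maps $\mathcal{R}_n$ into itself).
   Context: Fix $n\geq 2$ and a set $D_n\subseteq\mathbb{Q}^n$ which is dense in $\mathbb{Q}^n$ (product topology) and such that no two distinct points of $D_n$ share a common coordinate. $\mathbf{D}_n=(D_n,<)$ with $<$ the product order ($\mathbf{a}<\mathbf{b}$ iff $a_i\leq b_i$ for all $i$ and $\mathbf{a}\neq\mathbf{b}$); $\mathrm{Aut}(\mathbf{D}_n)$ carries the topology of pointwise convergence. $\mathcal{R}_n$ is the set of $n$-tuples $(\prec_1,\ldots,\prec_n)$ of strict linear orders on $D_n$ with $\prec_1\cap\cdots\cap\prec_n\;=\;<$, topologized as a subspace of $(\{0,1\}^{D_n^2})^n$. *)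

From HB Require Import structures.
From mathcomp Require Import all_boot all_order all_algebra.
From mathcomp Require Import all_classical all_reals all_analysis.
Set Implicit Arguments. Unset Strict Implicit. Unset Printing Implicit Defensive.
Import Order.TTheory GRing.Theory Num.Theory.
Local Open Scope classical_set_scope.
Local Open Scope ring_scope.

(* Q^n with the product topology of the usual (= order) topology of Q. *)
Definition Qn (n : nat) := {ptws 'I_n -> order_topology rat}.

Definition prod_lt (n : nat) (a b : Qn n) : Prop :=
  (forall i, a i <= b i) /\ a <> b.

Definition no_common_coord (n : nat) (D : set (Qn n)) : Prop :=
  forall a b, D a -> D b -> a <> b -> forall i : 'I_n, a i <> b i.

Definition Dpt (n : nat) (D : set (Qn n)) := {x : Qn n | x \in D}.

Definition Dlt (n : nat) (D : set (Qn n)) (a b : Dpt D) : Prop :=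
  prod_lt (val a) (val b).

Definition FunSp (n : nat) (D : set (Qn n)) :=
  {ptws Dpt D -> discrete_topology (Dpt D)}.

Definition AutD (n : nat) (D : set (Qn n)) : set (FunSp D) :=
  [set g | bijective g /\ forall a b, Dlt a b <-> Dlt (g a) (g b)].

Definition RelSp (n : nat) (D : set (Qn n)) :=
  {ptws 'I_n -> {ptws (Dpt D * Dpt D)%type -> bool}}.

Definition strict_linear_order (n : nat) (D : set (Qn n))
    (r : Dpt D * Dpt D -> bool) : Prop :=
  [/\ (forall a, ~~ r (a, a)),
      (forall a b c, r (a, b) -> r (b, c) -> r (a, c)) &
      (forall a b, a <> b -> r (a, b) \/ r (b, a))].

Definition Rn (n : nat) (D : set (Qn n)) : set (RelSp D) :=
  [set R | (forall i, strict_linear_order (R i)) /\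
           (forall a b, (forall i, R i (a, b)) <-> Dlt a b)].

(* the inverse g^{-1} of a (bijective) map g (chosen classically; for
   bijective g it is the genuine inverse) *)
Definition finv (n : nat) (D : set (Qn n)) (g : Dpt D -> Dpt D) (a : Dpt D) : Dpt D :=
  match pselect (exists x, g x = a) with
  | left e => projT1 (cid e)
  | right _ => a
  end.

Definition logic_act (n : nat) (D : set (Qn n)) (g : FunSp D) (R : RelSp D) : RelSp D :=
  fun i p => R i (finv g p.1, finv g p.2).

Arguments AutD {n} D.
Arguments Rn {n} D.

From Pilot Require Import Defs.
From HB Require Import structures.
From mathcomp Require Import all_boot all_order all_algebra fingroup perm.
From mathcomp Require Import all_classical all_reals all_analysis.
From mathcomp Require Import lra.
Set Implicit Arguments. Unset Strict Implicit. Unset Printing Implicit Defensive.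
Import Order.TTheory GRing.Theory Num.Theory.
Local Open Scope classical_set_scope.
Local Open Scope ring_scope.

(* For (<_1, ..., <_n) in R_n, call a, b swapped at j if b_j < a_j but a_k < b_k for
   k <> j. Some <_i must reverse such a pair, since otherwise a < b. Using density and
   distinct coordinates one places n pairs, one swapped at each coordinate, so that no <_i
   reverses two of them; hence the reversing index is unique, and comparing pairs swapped
   at the same j shows it depends only on j. This gives a permutation p with <_(p j) the
   order of the j-th coordinate, so R_n is the set of coordinate orders up to reindexing,
   and transitivity amounts to realising every permutation of coordinates by an
   automorphism of D_n, which a back-and-forth argument over the countable set D_n
   provides. Continuity holds because, near a bijection g0, each entry of g . R depends
   only on the values of g at two points and on one entry of R. *)

Section FiniteSeparation.
Variable R : realFieldType.
Implicit Types L U : seq R.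

Lemma exists_lt_seq U : exists c, {in U, forall u, c < u}.
Proof.
elim: U => [|u U [c Uc]]; first by exists 0.
exists (Num.min c (u - 1)) => v; rewrite inE => /predU1P [->|/Uc cv].
  by rewrite gt_min; apply/orP; right; lra.
by rewrite gt_min cv.
Qed.

Lemma exists_between_seq L U : {in L & U, forall l u, l < u} ->
  exists c, {in L, forall l, l <= c} /\ {in U, forall u, c < u}.
Proof.
elim: L => [|l L IH] LU; first by have [c Uc] := exists_lt_seq U; exists c.
have [|c [Lc cU]] := IH.
  by move=> l' u l'L uU; apply: LU; rewrite // inE l'L orbT.
exists (Num.max l c); split.
  by move=> v; rewrite inE => /predU1P [->|/Lc vc]; rewrite le_max ?lexx ?vc ?orbT.
by move=> u uU; rewrite gt_max cU // LU ?mem_head.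
Qed.

Lemma exists_gap_seq L U : {in L & U, forall l u, l < u} ->
  exists lo hi, [/\ lo < hi, {in L, forall l, l <= lo} & {in U, forall u, hi <= u}].
Proof.
move=> /exists_between_seq [lo [Llo loU]].
have [|c [Uc clo]] := @exists_between_seq (map -%R U) [:: - lo].
  by move=> _ w /mapP [u uU ->]; rewrite inE => /eqP ->; rewrite ltrN2 loU.
exists lo, (- c); split => //; first by rewrite ltrNr clo ?mem_head.
by move=> u uU; rewrite lerNl Uc ?map_f.
Qed.

End FiniteSeparation.

Lemma cvg_prod_topology (I : Type) (K : I -> topologicalType)
    (F : set_system (prod_topology K)) (f : prod_topology K) :
  Filter F -> (forall i, (fun g => g i) @ F --> f i) -> F --> f.
Proof.
move=> FF Fi.
apply/(@cvg_sup _ _ (fun i => Topological.class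
  (initial_topology (fun g : (forall i, K i) => g i))) F f FF) => i.
move=> A /= [_ [[B oB <-] Bfi BA]].
have /Fi FB : nbhs (f i) B by apply: open_nbhs_nbhs.
by rewrite nbhs_filterE; apply: filterS BA FB.
Qed.

Lemma exists_nat_surj (S : Type) (C : countType) (f : S -> C) (x0 : S) :
  injective f -> exists e : nat -> S, forall x, exists k, e k = x.
Proof.
move=> f_inj.
pose e k := if pselect (exists x, pickle (f x) = k) is left h then projT1 (cid h) else x0.
exists e => x; exists (pickle (f x)); rewrite /e.
case: pselect => [h|[]]; last by exists x.
by apply: f_inj; apply: (pcan_inj pickleK); exact: projT2 (cid h).
Qed.

Section BackAndForth.
Variables (T : eqType) (C : T * T -> T * T -> Prop).

Definition coherent (s : seq (T * T)) := {in s &, forall p q, C p q}.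

Section Stages.
Variables (e : nat -> T) (forth back : seq (T * T) * T -> T).

Fixpoint stage k : seq (T * T) :=
  if k is k'.+1 then
    let s := (e k', forth (stage k', e k')) :: stage k' in (back (s, e k'), e k') :: s
  else [::].

Lemma stage_sub k k' : (k <= k')%N -> {subset stage k <= stage k'}.
Proof.
elim: k' => [|k' IH]; first by rewrite leqn0 => /eqP ->.
rewrite leq_eqVlt => /predU1P [-> //|/IH sub p /sub pk].
by rewrite /= !inE pk !orbT.
Qed.

Hypothesis forthP : forall sx, coherent sx.1 -> coherent ((sx.2, forth sx) :: sx.1).
Hypothesis backP : forall sy, coherent sy.1 -> coherent ((back sy, sy.2) :: sy.1).

Lemma stage_rel k k' p q : p \in stage k -> q \in stage k' -> C p q.
Proof.
have rel k'' : coherent (stage k'').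
  by elim: k'' => [|k'' IH] //=; apply: (@backP (_, _)); apply: (@forthP (_, _)).
by move=> /(stage_sub (leq_maxl k k')) pk /(stage_sub (leq_maxr k k')); apply: rel.
Qed.

End Stages.


Hypothesis C_forth : forall s x, coherent s -> exists y, coherent ((x, y) :: s).
Hypothesis C_back : forall s y, coherent s -> exists x, coherent ((x, y) :: s).
Hypothesis C_functional : forall x y y', C (x, y) (x, y') -> C (x, y') (x, y) -> y = y'.
Hypothesis C_injective : forall x x' y, C (x, y) (x', y) -> C (x', y) (x, y) -> x = x'.

Theorem back_and_forth (e : nat -> T) : (forall x, exists k, e k = x) ->
  exists g : T -> T, bijective g /\ forall a b, C (a, g a) (b, g b).
Proof.
move=> /choice [idx idxK].
have /choice [forth forthP] : forall sx : seq (T * T) * T, exists y,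
    coherent sx.1 -> coherent ((sx.2, y) :: sx.1).
  move=> [s x]; have [/(C_forth x) [y]|] := pselect (coherent s); last by exists x.
  by exists y.
have /choice [back backP] : forall sy : seq (T * T) * T, exists x,
    coherent sy.1 -> coherent ((x, sy.2) :: sy.1).
  move=> [s y]; have [/(C_back y) [x]|] := pselect (coherent s); last by exists y.
  by exists x.
pose g x := forth (stage e forth back (idx x), x).
pose h y := back ((y, g y) :: stage e forth back (idx y), y).
have g_st x : (x, g x) \in stage e forth back (idx x).+1 by rewrite /= idxK !inE eqxx orbT.
have h_st y : (h y, y) \in stage e forth back (idx y).+1 by rewrite /= idxK !inE eqxx.
exists g; split=> [|a b]; last exact (stage_rel forthP backP (g_st a) (g_st b)).
exists h => [x|y].
  exact: C_injective _ _ _ (stage_rel forthP backP (h_st _) (g_st _))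
                           (stage_rel forthP backP (g_st _) (h_st _)).
exact: C_functional _ _ _ (stage_rel forthP backP (g_st _) (h_st _))
                          (stage_rel forthP backP (h_st _) (g_st _)).
Qed.

End BackAndForth.

Section DensePoints.
Variables (n : nat) (D : set (Qn n)).
Hypothesis n_gt0 : (0 < n)%N.
Hypothesis D_dense : dense D.
Hypothesis D_sep : no_common_coord D.

Local Notation T := (Dpt D).
Implicit Types a b c d x y : T.

Definition crd a (i : 'I_n) : rat := val a i.

Let i0 : 'I_n := Ordinal n_gt0.

Lemma crd_inj i a b : crd a i = crd b i -> a = b.
Proof.
move=> abi; apply: contrapT => ab.
apply: (D_sep (set_mem (valP a)) (set_mem (valP b)) _ abi).
by move=> /val_inj.
Qed.

Lemma crd_lt_total i a b : a <> b -> (crd a i < crd b i) || (crd b i < crd a i).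
Proof. by move=> ab; rewrite -neq_lt; apply/eqP => /crd_inj. Qed.

Lemma DltE a b : Dlt a b <-> forall i, crd a i < crd b i.
Proof.
split=> [[le_ab neq_ab] i|lt_ab].
  rewrite lt_neqAle le_ab andbT; apply/eqP => /crd_inj ab.
  by apply: neq_ab; rewrite ab.
split=> [i|ab]; first exact: ltW.
by have := lt_ab i0; rewrite /crd ab ltxx.
Qed.

Lemma exists_in_box (lo hi : 'I_n -> rat) : (forall i, lo i < hi i) ->
  exists d, forall i, lo i < crd d i < hi i.
Proof.
move=> lohi; pose O := [set x : Qn n | forall i, lo i < x i < hi i].
have O_open : open O.
  rewrite openE => x Ox.
  apply: (@filter_forall _ _ (fun i => [set y : Qn n | lo i < y i < hi i]) (nbhs x) _) => i.
  have : nbhs x (@proj _ (fun=> order_topology rat) i @^-1` `]lo i, hi i[%classic).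
    apply: proj_continuous; apply: open_nbhs_nbhs.
    by split; [exact: itv_open | rewrite /= in_itv /= Ox].
  by apply: filterS => y /=; rewrite in_itv.
have O_nonempty : O !=set0.
  by exists (fun i => (lo i + hi i) / 2) => i /=; have [-> ->] := midf_lt (lohi i).
have [x [Ox Dx]] := D_dense O_nonempty O_open.
by exists (exist _ x (mem_set Dx)).
Qed.

Lemma exists_Dpt_enum : exists e : nat -> T, forall x, exists k, e k = x.
Proof.
have [|x0 _] := @exists_in_box (fun _ => 0) (fun _ => 1) => //.
apply: (@exists_nat_surj _ _ (fun x => [ffun i => crd x i]) x0).
by move=> x y /ffunP /(_ i0); rewrite !ffunE; apply: crd_inj.
Qed.

Definition swapped j a b := crd b j < crd a j /\ forall k, k != j -> crd a k < crd b k.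

Lemma swapped_neq j a b : swapped j a b -> a <> b.
Proof. by move=> [ba _] ab; move: ba; rewrite ab ltxx. Qed.

Lemma exists_swapped_spread k (l u : 'I_n -> rat) : (forall i, l i < u i) ->
  exists x y, [/\ swapped k x y, l k < crd y k, crd x k < u k &
    forall i, i != k -> crd x i < l i /\ u i < crd y i].
Proof.
move=> lu; have luk := lu k.
have [|x xP] := @exists_in_box (fun i => if i == k then (l k + u k) / 2 else l i - 1)
                              (fun i => if i == k then u k else l i).
  by move=> i; case: eqP => _; lra.
have [|y yP] := @exists_in_box (fun i => if i == k then l k else u i)
                              (fun i => if i == k then (l k + u k) / 2 else u i + 1).
  by move=> i; case: eqP => _; lra.
have [xk yk] := (xP k, yP k); rewrite !eqxx in xk yk.
have xy_off i : i != k -> crd x i < l i /\ u i < crd y i.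
  by move=> /negPf ik; have := xP i; have := yP i; rewrite ik; lra.
exists x, y; split; [split|lra|lra|by []]; first lra.
by move=> i /xy_off; have := lu i; lra.
Qed.

Lemma exists_swapped j : exists a b, swapped j a b.
Proof.
have [|x [y [sw _ _ _]]] := @exists_swapped_spread j (fun _ => 0) (fun _ => 1) => //.
by exists x, y.
Qed.

Lemma swapped_family j a b : swapped j a b -> exists x y : 'I_n -> T,
  [/\ x j = a, y j = b, forall k, swapped k (x k) (y k) &
      forall k k', k != k' -> Dlt (x k) (y k')].
Proof.
move=> sw_ab; have [ba_j ab_off] := sw_ab.
(* [l] and [u] are the coordinatewise min and max of [a] and [b]. *)
pose l i := if i == j then crd b i else crd a i.
pose u i := if i == j then crd a i else crd b i.
have ab_lu i : [/\ l i <= crd a i, l i <= crd b i, crd a i <= u i & crd b i <= u i].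
  by rewrite /l /u; case: eqP => [->|/eqP/ab_off]; split; lra.
have lu_off i : i != j -> l i = crd a i /\ u i = crd b i.
  by rewrite /l /u => /negPf ->.
have lu i : l i < u i by rewrite /l /u; case: eqP => [->|/eqP/ab_off] //.
have /choice [p pP] : forall k, exists p : T * T,
    [/\ swapped k p.1 p.2, l k < crd p.2 k, crd p.1 k < u k &
        forall i, i != k -> crd p.1 i < l i /\ u i < crd p.2 i].
  by move=> k; have [x [y xyP]] := exists_swapped_spread k lu; exists (x, y).
have ab_p k : k != j -> Dlt a (p k).2 /\ Dlt (p k).1 b.
  move=> kj; have [_ lk ku p_off] := pP k; have [lak ubk] := lu_off k kj.
  by split; apply/DltE => i; case: (ab_lu i) => *;
    have [->|/p_off[]] := eqVneq i k; lra.
have p_cross k k' : k != k' -> Dlt (p k).1 (p k').2.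
  move=> kk'; have [_ lk ku p_off] := pP k; have [_ lk' uk' p'_off] := pP k'.
  apply/DltE => i; have := lu i; have [->|/p_off[]] := eqVneq i k.
    by have [] := p'_off k kk'; lra.
  have [->|/p'_off[]] := eqVneq i k'; lra.
exists (fun k => if k == j then a else (p k).1), (fun k => if k == j then b else (p k).2).
split; rewrite ?eqxx //.
  by move=> k; case: eqP => [->|_] //; have [] := pP k.
move=> k k'; case: (eqVneq k j) => [->|kj]; case: (eqVneq k' j) => [_|k'j] //.
- by move=> _; case: (ab_p k' k'j).
- by move=> _; case: (ab_p k kj).
- exact: p_cross.
Qed.

Lemma swapped_inside j a b (M m : rat) : swapped j a b ->
  exists x y, [/\ swapped j x y, Dlt a x, Dlt y b, M < crd x j & crd y j < m].
Proof.
move=> [ba_j ab_off].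
have [a_hi M_hi] : crd a j <= Num.max (crd a j) M /\ M <= Num.max (crd a j) M.
  by rewrite !le_max !lexx orbT.
have [lo_b lo_m] : Num.min (crd b j) m <= crd b j /\ Num.min (crd b j) m <= m.
  by rewrite !ge_min !lexx orbT.
set hi := Num.max _ _ in a_hi M_hi; set lo := Num.min _ _ in lo_b lo_m.
have [|x xP] := @exists_in_box (fun i => if i == j then hi else crd a i)
    (fun i => if i == j then hi + 1 else (crd a i + crd b i) / 2).
  by move=> i; case: eqP => [_|/eqP/ab_off]; lra.
have [|y yP] := @exists_in_box (fun i => if i == j then lo - 1 else (crd a i + crd b i) / 2)
    (fun i => if i == j then lo else crd b i).
  by move=> i; case: eqP => [_|/eqP/ab_off]; lra.
have [xj yj] := (xP j, yP j); rewrite !eqxx in xj yj.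
have xy_off i : i != j -> [/\ crd a i < crd x i, crd x i < crd y i & crd y i < crd b i].
  by move=> /negPf ij; have := xP i; have := yP i; rewrite ij; split; lra.
exists x, y; split; [split| | |lra|lra]; first lra.
- by move=> i /xy_off[].
- by apply/DltE => i; have [->|/xy_off[]] := eqVneq i j; lra.
- by apply/DltE => i; have [->|/xy_off[]] := eqVneq i j; lra.
Qed.

Lemma swapped_outside j x y c d : swapped j x y -> swapped j c d ->
  crd c j < crd x j -> crd y j < crd d j ->
  exists x' y', [/\ swapped j x' y', Dlt x' x, Dlt x' c, Dlt y y' & Dlt d y'].
Proof.
move=> [yx_j xy_off] [dc_j cd_off] cx_j yd_j.
have mn i : Num.min (crd x i) (crd c i) <= crd x i /\ Num.min (crd x i) (crd c i) <= crd c i.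
  by rewrite !ge_min !lexx orbT.
have mx i : crd y i <= Num.max (crd y i) (crd d i) /\ crd d i <= Num.max (crd y i) (crd d i).
  by rewrite !le_max !lexx orbT.
have [|x' x'P] := @exists_in_box
    (fun i => if i == j then (crd c j + crd d j) / 2 else Num.min (crd x i) (crd c i) - 1)
    (fun i => if i == j then crd c j else Num.min (crd x i) (crd c i)).
  by move=> i; case: eqP => _; lra.
have [|y' y'P] := @exists_in_box
    (fun i => if i == j then crd d j else Num.max (crd y i) (crd d i))
    (fun i => if i == j then (crd c j + crd d j) / 2 else Num.max (crd y i) (crd d i) + 1).
  by move=> i; case: eqP => _; lra.
have [x'j y'j] := (x'P j, y'P j); rewrite !eqxx in x'j y'j.
have off i : i != j -> [/\ crd x' i < crd x i, crd x' i < crd c i,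
                           crd y i < crd y' i & crd d i < crd y' i].
  move=> /negPf ij; have := x'P i; have := y'P i; rewrite ij.
  by case: (mn i) (mx i) => *; split; lra.
exists x', y'; split.
- split; first lra.
  by move=> i ij; have [? _ ? _] := off i ij; have := xy_off i ij; lra.
- by apply/DltE => i; have [->|/off[]] := eqVneq i j; lra.
- by apply/DltE => i; have [->|/off[]] := eqVneq i j; lra.
- by apply/DltE => i; have [->|/off[]] := eqVneq i j; lra.
- by apply/DltE => i; have [->|/off[]] := eqVneq i j; lra.
Qed.

Section CoordinateOrders.
Variable R : RelSp D.
Hypothesis R_Rn : Rn D R.

Lemma R_irrefl i a : ~~ R i (a, a).
Proof. by case: R_Rn => /(_ i) []. Qed.

Lemma R_trans i a b c : R i (a, b) -> R i (b, c) -> R i (a, c).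
Proof. by case: R_Rn => /(_ i) [_ + _] _; apply. Qed.

Lemma R_total i a b : a <> b -> R i (a, b) \/ R i (b, a).
Proof. by case: R_Rn => /(_ i) [_ _ +] _; apply. Qed.

Lemma R_asym i a b : R i (a, b) -> ~~ R i (b, a).
Proof. by move=> ab; apply/negP => /(R_trans ab); apply/negP/R_irrefl. Qed.

Lemma R_of_Dlt i a b : Dlt a b -> R i (a, b).
Proof. by case: R_Rn => _ /(_ a b) [_ +] ab; apply. Qed.

Lemma Dlt_of_R a b : (forall i, R i (a, b)) -> Dlt a b.
Proof. by case: R_Rn => _ /(_ a b) []. Qed.

Lemma reversed_of_swapped j a b : swapped j a b -> exists i, R i (b, a).
Proof.
move=> sw; apply: contrapT => no_rev.
have /DltE/(_ j) : Dlt a b.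
  apply: Dlt_of_R => i; have [//|ba] := R_total i (swapped_neq sw).
  by case: no_rev; exists i.
by case: sw => ba_j _; lra.
Qed.

Lemma not_reversed_twice i a b c d :
  Dlt a d -> Dlt c b -> R i (b, a) -> R i (d, c) -> False.
Proof.
move=> ad cb ba dc; have /negP := R_irrefl i b; apply.
exact: R_trans ba (R_trans (R_of_Dlt i ad) (R_trans dc (R_of_Dlt i cb))).
Qed.

Lemma reversed_contract i a b x y : R i (b, a) -> Dlt a x -> Dlt y b -> R i (y, x).
Proof. by move=> ba ax yb; exact: R_trans (R_of_Dlt i yb) (R_trans ba (R_of_Dlt i ax)). Qed.

Lemma reversal_unique j a b i i' : swapped j a b -> R i (b, a) -> R i' (b, a) -> i = i'.
Proof.
move=> /swapped_family [x [y [<- <- sw cross]]] ri ri'.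
have pair_uniq t k k' : R t (y k, x k) -> R t (y k', x k') -> k = k'.
  move=> h h'; apply/eqP; apply: contraT => kk'; exfalso.
  by apply: (not_reversed_twice (cross _ _ kk') (cross k' k _) h h'); rewrite eq_sym.
have /choice [r rP] : forall k, exists t, R t (y k, x k).
  by move=> k; exact: reversed_of_swapped (sw k).
have r_inj : injective r by move=> k k' e; apply: (pair_uniq (r k)); rewrite // e.
have [r' _ r'K] := injF_bij r_inj.
have index_of t k : R t (y k, x k) -> t = r k.
  by move=> h; have := rP (r' t); rewrite r'K => h'; rewrite -[t]r'K (pair_uniq _ _ _ h' h).
by rewrite (index_of i j ri) (index_of i' j ri').
Qed.

Lemma reversal_indep j a b c d i i' : swapped j a b -> swapped j c d ->
  R i (b, a) -> R i' (d, c) -> i = i'.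
Proof.
move=> sw_ab sw_cd ri ri'.
(* (x, y) lies inside (a, b) and (x', y') outside both (x, y) and (c, d), so that
   reversing an outer pair reverses the inner one. *)
have [x [y [sw_xy ax yb cx yd]]] := swapped_inside (crd c j) (crd d j) sw_ab.
have [x' [y' [sw' x'x x'c yy' dy']]] := swapped_outside sw_xy sw_cd cx yd.
have [q rq] := reversed_of_swapped sw'.
rewrite (reversal_unique sw_xy (reversed_contract ri ax yb) (reversed_contract rq x'x yy')).
exact: reversal_unique sw_cd (reversed_contract rq x'c dy') ri'.
Qed.

Lemma exists_reversing_index j : exists i, forall a b, swapped j a b -> R i (b, a).
Proof.
have [a0 [b0 sw0]] := exists_swapped j.
have [i ri] := reversed_of_swapped sw0.
exists i => a b sw; have [i' ri'] := reversed_of_swapped sw.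
by rewrite (reversal_indep sw0 sw ri ri').
Qed.

Section ReversingIndex.
Variable pi : 'I_n -> 'I_n.
Hypothesis piP : forall j a b, swapped j a b -> R (pi j) (b, a).

Lemma reversing_index_lt j a b : crd a j < crd b j -> R (pi j) (a, b).
Proof.
move=> ab_j.
have mn i : Num.min (crd a i) (crd b i) <= crd a i /\ Num.min (crd a i) (crd b i) <= crd b i.
  by rewrite !ge_min !lexx orbT.
have [|c cP] := @exists_in_box
    (fun i => if i == j then crd a j else Num.min (crd a i) (crd b i) - 1)
    (fun i => if i == j then crd b j else Num.min (crd a i) (crd b i)).
  by move=> i; case: eqP => _; lra.
apply: (R_trans (piP (_ : swapped j c a)) (R_of_Dlt _ (_ : Dlt c b))).
  split; first by have := cP j; rewrite eqxx; lra.
  by move=> i /negPf ij; have := cP i; rewrite ij; have := mn i; case; lra.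
by apply/DltE => i; have := cP i; case: eqP => [->|_]; have := mn i; case; lra.
Qed.

Lemma reversing_index_coord j a b : R (pi j) (a, b) = (crd a j < crd b j).
Proof.
apply/idP/idP => [Rab|]; last exact: reversing_index_lt.
have ab : a <> b by move=> eab; move: Rab; rewrite eab (negPf (R_irrefl _ _)).
case/orP: (crd_lt_total j ab) => // /reversing_index_lt Rba.
by have := R_asym Rab; rewrite Rba.
Qed.

End ReversingIndex.

Lemma Rn_coord_perm : exists p : {perm 'I_n},
  forall j a b, R (p j) (a, b) = (crd a j < crd b j).
Proof.
have [pi piP] := choice exists_reversing_index.
have pi_inj : injective pi.
  move=> j j' e; apply/eqP; apply: contraT => jj'.
  have [a [b [ba_j ab_off]]] := exists_swapped j.
  have j'j : j' != j by rewrite eq_sym.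
  have := reversing_index_coord piP j' a b.
  by rewrite -e reversing_index_coord // (lt_gtF ba_j) (ab_off _ j'j).
by exists (perm pi_inj) => j a b; rewrite permE reversing_index_coord.
Qed.

End CoordinateOrders.

Definition coord_compat (rho : {perm 'I_n}) (p q : T * T) :=
  forall j, (crd p.1 j < crd q.1 j) = (crd p.2 (rho j) < crd q.2 (rho j)).

Lemma coord_compat_forth rho s x : coherent (coord_compat rho) s ->
  exists y, coherent (coord_compat rho) ((x, y) :: s).
Proof.
move=> s_rel.
have [[y xy_s]|x_new] := pselect (exists y, (x, y) \in s).
  by exists y => p q; rewrite !inE => /predU1P[->|ps] /predU1P[->|qs]; exact: s_rel.
have s_new q : q \in s -> q.1 <> x.
  by move=> qs qx; apply: x_new; exists q.2; rewrite -qx -surjective_pairing.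
pose below j := [seq crd q.2 (rho j) | q <- s & crd q.1 j < crd x j].
pose above j := [seq crd q.2 (rho j) | q <- s & crd x j < crd q.1 j].
have /choice [gap gapP] : forall j, exists lh : rat * rat,
    [/\ lh.1 < lh.2, {in below j, forall l, l <= lh.1} & {in above j, forall u, lh.2 <= u}].
  move=> j; have [|lo [hi gapP]] := @exists_gap_seq _ (below j) (above j).
    move=> _ _ /mapP [q + ->] /mapP [q' + ->].
    rewrite !mem_filter => /andP [qx qs] /andP [xq' q's].
    by rewrite -(s_rel q q' qs q's j); exact: lt_trans qx xq'.
  by exists (lo, hi).
have [|y yP] := @exists_in_box (fun m => (gap (rho^-1 m)%g).1) (fun m => (gap (rho^-1 m)%g).2).
  by move=> m; case: (gapP (rho^-1 m)%g).
have y_gap j : (gap j).1 < crd y (rho j) < (gap j).2 by have := yP (rho j); rewrite permK.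
have below_y j q : q \in s -> crd q.1 j < crd x j -> crd q.2 (rho j) < crd y (rho j).
  move=> qs qx; have qb : crd q.2 (rho j) \in below j by apply: map_f; rewrite mem_filter qx.
  by have [_ /(_ _ qb) + _] := gapP j; have := y_gap j; lra.
have above_y j q : q \in s -> crd x j < crd q.1 j -> crd y (rho j) < crd q.2 (rho j).
  move=> qs xq; have qa : crd q.2 (rho j) \in above j by apply: map_f; rewrite mem_filter xq.
  by have [_ _ /(_ _ qa)] := gapP j; have := y_gap j; lra.
have compat_new q : q \in s -> coord_compat rho (x, y) q /\ coord_compat rho q (x, y).
  move=> qs; split=> j /=; case/orP: (crd_lt_total j (s_new q qs)) => [qx|xq].
  - by rewrite (lt_gtF qx) (lt_gtF (below_y j q qs qx)).
  - by rewrite xq (above_y j q qs xq).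
  - by rewrite qx (below_y j q qs qx).
  - by rewrite (lt_gtF xq) (lt_gtF (above_y j q qs xq)).
exists y => p q; rewrite !inE => /predU1P[->|ps] /predU1P[->|qs].
- by move=> j; rewrite !ltxx.
- exact: (compat_new q qs).1.
- exact: (compat_new p ps).2.
- exact: s_rel.
Qed.

Lemma coord_compat_back rho s y : coherent (coord_compat rho) s ->
  exists x, coherent (coord_compat rho) ((x, y) :: s).
Proof.
pose swap (p : T * T) := (p.2, p.1).
move=> s_rel; have [|x xP] := @coord_compat_forth (rho^-1)%g (map swap s) y.
  move=> _ _ /mapP [p ps ->] /mapP [q qs ->] m /=.
  by rewrite (s_rel p q ps qs (rho^-1 m)%g) permKV.
have swap_in p : p \in (x, y) :: s -> swap p \in (y, x) :: map swap s.
  by rewrite !inE => /predU1P [->|/(map_f swap) ->]; rewrite ?eqxx ?orbT.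
exists x => p q /swap_in ps /swap_in qs j.
by have /= := xP _ _ ps qs (rho j); rewrite permK.
Qed.

Lemma coord_compat_functional rho x y y' :
  coord_compat rho (x, y) (x, y') -> coord_compat rho (x, y') (x, y) -> y = y'.
Proof.
move=> /(_ i0) /= yy' /(_ i0) /= y'y; apply: (@crd_inj (rho i0)); apply/eqP.
by rewrite eq_le !leNgt -yy' -y'y ltxx.
Qed.

Lemma coord_compat_injective rho x x' y :
  coord_compat rho (x, y) (x', y) -> coord_compat rho (x', y) (x, y) -> x = x'.
Proof.
move=> /(_ i0) /= xx' /(_ i0) /= x'x; apply: (@crd_inj i0); apply/eqP.
by rewrite eq_le !leNgt x'x xx' ltxx.
Qed.

Lemma exists_aut_coord_perm (rho : {perm 'I_n}) : exists g : T -> T, bijective g /\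
  forall a b j, (crd a j < crd b j) = (crd (g a) (rho j) < crd (g b) (rho j)).
Proof.
have [e e_surj] := exists_Dpt_enum.
have [g [g_bij gP]] := back_and_forth (@coord_compat_forth rho) (@coord_compat_back rho)
  (@coord_compat_functional rho) (@coord_compat_injective rho) e_surj.
by exists g.
Qed.

Lemma finvKV (g : T -> T) : bijective g -> cancel (Defs.finv g) g.
Proof.
move=> [g' _ g'K] a; rewrite /Defs.finv; case: pselect => [h|[]].
  exact: projT2 (cid h).
by exists (g' a).
Qed.

Lemma finvK (g : T -> T) : bijective g -> cancel g (Defs.finv g).
Proof. by move=> g_bij x; apply: (bij_inj g_bij); rewrite (finvKV g_bij). Qed.

Lemma finv_comp (g h : T -> T) : bijective g -> bijective h ->
  Defs.finv (g \o h) =1 Defs.finv h \o Defs.finv g.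
Proof.
move=> g_bij h_bij a; apply: (bij_inj (bij_comp g_bij h_bij)).
by rewrite (finvKV (bij_comp g_bij h_bij)) /= (finvKV h_bij) (finvKV g_bij).
Qed.

Lemma logic_act_Rn g R : AutD D g -> Rn D R -> Rn D (logic_act g R).
Proof.
move=> [g_bij g_Dlt] R_Rn; split=> [i|a b].
  split=> [a|a b c|a b ab]; rewrite /logic_act /=; first exact: R_irrefl.
    exact: R_trans.
  by apply: (R_total R_Rn) => // /(congr1 g); rewrite (finvKV g_bij a) (finvKV g_bij b).
rewrite /logic_act /=; split=> [/(Dlt_of_R R_Rn)/g_Dlt|ab i].
  by rewrite (finvKV g_bij a) (finvKV g_bij b).
by apply/(R_of_Dlt R_Rn)/g_Dlt; rewrite (finvKV g_bij a) (finvKV g_bij b).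
Qed.

Lemma logic_act_id R : logic_act (id : FunSp D) R = R.
Proof.
have id_bij : bijective (id : T -> T) by exists id.
by apply/funext => i; apply/funext => -[a b]; rewrite /logic_act /= !finvK.
Qed.

Lemma logic_act_comp g h R : AutD D g -> AutD D h ->
  logic_act ((g \o h) : FunSp D) R = logic_act g (logic_act h R).
Proof.
move=> [g_bij _] [h_bij _].
by apply/funext => i; apply/funext => -[a b]; rewrite /logic_act /= !(finv_comp g_bij h_bij).
Qed.

Lemma logic_act_transitive R S : Rn D R -> Rn D S ->
  exists2 g, AutD D g & logic_act g R = S.
Proof.
move=> /Rn_coord_perm [pR pRE] /Rn_coord_perm [pS pSE].
have [g [g_bij gE]] := exists_aut_coord_perm (pR * pS^-1)%g.
exists g.
  split=> // a b; rewrite !DltE; split=> [ab m|gab j]; last by rewrite gE.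
  by have := ab ((pR * pS^-1)^-1 m)%g; rewrite gE permKV.
apply/funext => i; apply/funext => -[a b]; rewrite /logic_act /=.
rewrite -[in LHS](permKV pR i) -[in RHS](permKV pS i) pRE pSE gE !(finvKV g_bij).
by rewrite permM permKV.
Qed.

Lemma logic_act_continuous : {within AutD D `*` Rn D,
  continuous (fun p : FunSp D * RelSp D => logic_act p.1 p.2)}.
Proof.
apply/subspace_continuousP => -[g0 R0] [/= [g0_bij _] _]; rewrite /from_subspace /=.
apply: cvg_prod_topology => i; apply: cvg_prod_topology => -[a b]; apply/discrete_cvg.
set c := Defs.finv g0 a; set d := Defs.finv g0 b.
have near_g0 (x : T) : nbhs g0 [set g : FunSp D | g x = g0 x].
  exact: (@proj_continuous T (fun=> discrete_topology T) x g0 _ (discrete_set1 (g0 x))).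
have near_R0 : nbhs R0 [set R : RelSp D | R i (c, d) = R0 i (c, d)].
  have near_R0i : nbhs (R0 i) [set r : {ptws (T * T)%type -> bool} | r (c, d) = R0 i (c, d)].
    exact: (@proj_continuous _ (fun=> bool) (c, d) (R0 i) _ (discrete_set1 _)).
  exact: (@proj_continuous 'I_n (fun=> {ptws (T * T)%type -> bool}) i R0 _ near_R0i).
exists ([set g : FunSp D | g c = g0 c /\ g d = g0 d],
        [set R : RelSp D | R i (c, d) = R0 i (c, d)]).
  by split; [exact: filterI (near_g0 c) (near_g0 d) | exact: near_R0].
move=> [g R] [/= [gc gd] Rcd] [/= [g_bij _] _]; rewrite /logic_act /=.
have finv_at x y : g x = g0 x -> g0 x = y -> Defs.finv g y = x.
  by move=> gx <-; rewrite -gx (finvK g_bij).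
by rewrite (finv_at c a gc (finvKV g0_bij a)) (finv_at d b gd (finvKV g0_bij b)).
Qed.

End DensePoints.

Theorem lemma6p6 (n : nat) (D : set (Qn n)) :
  (2 <= n)%N -> dense D -> no_common_coord D ->
  [/\ (forall g R, AutD D g -> Rn D R -> Rn D (logic_act g R)),
      (forall R, Rn D R -> logic_act (id : FunSp D) R = R),
      (forall g h R, AutD D g -> AutD D h -> Rn D R ->
         logic_act ((g \o h) : FunSp D) R = logic_act g (logic_act h R)),
      {within AutD D `*` Rn D,
         continuous (fun p : FunSp D * RelSp D => logic_act p.1 p.2)} &
      (forall R S, Rn D R -> Rn D S -> exists2 g, AutD D g & logic_act g R = S)].
Proof.
move=> n_ge2 D_dense D_sep; have n_gt0 : (0 < n)%N := ltnW n_ge2.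
split.
- exact: logic_act_Rn.
- by move=> R _; exact: logic_act_id.
- by move=> g h R g_aut h_aut _; exact: logic_act_comp.
- exact: logic_act_continuous.
- exact: logic_act_transitive.
Qed.
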